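(* Let $r,q\in\mathbb N$ and let $M=(a_{ik})_{i,k=0}^\infty$ be an infinite complex matrix with $a_{ik}=0$ whenever $k>i+r$ or $i>k+q$, $a_{i,i+r}=1$ and $a_{i+q,i}\neq 0$ for all $i\ge 0$. For $k\ge 0$, $m=1,\dots,r$, $n=1,\dots,q$ put $S^{m,n}_k=(M^k)_{m-1,n-1}$ (entries of the $k$-th matrix power; $M^0$ is the identity). Define the infinite matrix $(\alpha_{i,j})_{i,j\ge 0}$ by $\alpha_{i,j}=S^{m_1,n_1}_{k_1+k_2}$ with $k_1=\lfloor i/r\rfloor$, $k_2=\lfloor j/q\rfloor$, $m_1=\operatorname{rem}(i,r)+1$, $n_1=\operatorname{rem}(j,q)+1$, and let $\Delta_k=\det(\alpha_{i,j})_{i,j=0}^{k}$ for $k\ge 0$, $\Delta_{-1}=1$. Then $\Delta_0=\Delta_1=\dots=\Delta_{q-1}=1$ and, for every $i\ge 0$, $$\Delta_{i+q}=\prod_{j=0}^{i} a_{j+q,\,j}^{\;\lfloor (i-j)/q\rfloor+1},$$ i.e. $\Delta_{i+q}=(a_{i+q,i}\cdots a_{i+1,i-q+1})(a_{i,i-q}\cdots a_{i-q+1,i-2q+1})^2\cdots(\cdots a_{q,0})^{h}$ with $h=\lfloor (i+q)/q\rfloor$, where factors $a_{j+q,j}$ with $j<0$ are interpreted as $1$.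
   Context: $\operatorname{rem}(a,b)$ denotes the remainder of $a$ upon division by $b$. The product formula is an equivalent rewriting of the paper's grouped formula: the $q$ consecutive factors $a_{j+q,j}$ with $j=i,\dots,i-q+1$ appear to power 1, the next $q$ to power 2, etc., up to $a_{q,0}$ appearing to power $h$. *)

From HB Require Import structures.
From mathcomp Require Import all_boot all_order all_algebra.
From mathcomp Require Import complex.
Set Implicit Arguments. Unset Strict Implicit. Unset Printing Implicit Defensive.
Import Order.TTheory GRing.Theory Num.Theory.
Local Open Scope ring_scope.

(* Entry (m, n) (0-indexed) of the k-th power of the banded infinite matrix M,
   computed through the top-left square block of size (k.+1 * r + q).+1.
   When M satisfies the band condition a_{ik} = 0 for k > i + r, every path
   of length k in the (row-finite) product starting at a row m < r only visits
   indices < k.+1 * r, so this truncation equals the genuine infinite product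
   entry (M^k)_{m,n} for all m < r and n < q (the only entries used). *)
Definition Spow (C : pzRingType) (r q : nat) (M : nat -> nat -> C)
    (k m n : nat) : C :=
  let N := (k.+1 * r + q)%N in
  ((\matrix_(i < N.+1, j < N.+1) M i j) ^+ k) (inord m) (inord n).

Definition S (C : pzRingType) (r q : nat) (M : nat -> nat -> C)
    (k m n : nat) : C := Spow r q M k m.-1 n.-1.

Definition alpha (C : pzRingType) (r q : nat) (M : nat -> nat -> C)
    (i j : nat) : C :=
  S r q M (i %/ r + j %/ q) (i %% r).+1 (j %% q).+1.

Definition Delta (C : comPzRingType) (r q : nat) (M : nat -> nat -> C)
    (k : nat) : C :=
  \det (\matrix_(i < k.+1, j < k.+1) alpha r q M i j).

(* Since M is banded with a unit r-th superdiagonal, row m of M^k vanishes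
   beyond column m + k r and equals 1 there; dually, column n of M^k vanishes
   below row n + k q, where it equals the product of the subdiagonal entries
   a_{n+(t+1)q, n+tq}, t < k.  Writing M^{k1+k2} = M^{k1} M^{k2} therefore
   factors (alpha_{ij}) as L U, with L lower unitriangular (row i of L is row
   rem(i,r) of M^{floor(i/r)}) and U upper triangular (column j of U is column
   rem(j,q) of M^{floor(j/q)}).  So Delta_K is the product of the diagonal
   entries of U, and a_{p+q,p} occurs in floor((K-p)/q) of them. *)

From HB Require Import structures.
From mathcomp Require Import all_boot all_order all_algebra.
From mathcomp Require Import complex.
From mathcomp Require Import zify.
Set Implicit Arguments. Unset Strict Implicit. Unset Printing Implicit Defensive.
Import Order.TTheory GRing.Theory Num.Theory.
Local Open Scope ring_scope.

Lemma big_ord_trunc (R : Type) (idx : R) (op : Monoid.law idx) (F : nat -> R)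
    (n m : nat) :
  (n <= m)%N -> (forall i, (n <= i < m)%N -> F i = idx) ->
  \big[op/idx]_(i < m) F i = \big[op/idx]_(i < n) F i.
Proof.
move=> le_nm F0; rewrite (big_ord_widen m F le_nm) [RHS]big_mkcond.
by apply: eq_bigr => i _; case: ifPn => // ltin; rewrite F0 // leqNgt ltin ltn_ord.
Qed.

Section Pivots.
Variables (C : comPzRingType) (q : nat) (f : nat -> C).
Hypothesis q_gt0 : (0 < q)%N.

Definition pivot (j : nat) : C := \prod_(t < j %/ q) f (j %% q + t * q)%N.

Lemma pivot_small j : (j < q)%N -> pivot j = 1.
Proof. by move=> ltjq; rewrite /pivot divn_small // big_ord0. Qed.

Lemma pivotDq j : pivot (j + q) = pivot j * f j.
Proof.
rewrite /pivot divnDr ?dvdnn // divnn q_gt0 addn1 big_ord_recr /= modnDr.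
by rewrite [X in f X]addnC -divn_eq.
Qed.

Lemma prod_pivotDq i :
  \prod_(j < (i + q).+1) pivot j = (\prod_(j < i.+1) pivot j) * \prod_(j < i.+1) f j.
Proof.
rewrite -addSn addnC big_split_ord /= big1 ?mul1r => [|j _]; last exact: pivot_small.
by rewrite -big_split; apply: eq_bigr => j _; rewrite /= addnC pivotDq.
Qed.

Lemma prod_expDq i :
  \prod_(j < (i + q).+1) f j ^+ ((i + q - j) %/ q)
  = \prod_(j < i.+1) f j ^+ ((i - j) %/ q).+1.
Proof.
rewrite -addSn big_split_ord /= [X in _ * X]big1 ?mulr1 => [|j _]; last first.
  by rewrite addSnnS subnDl divn_small ?expr0 // ltn_subrL q_gt0.
apply: eq_bigr => j _; have leji : (j <= i)%N by rewrite -ltnS.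
by rewrite /= -addnBAC // divnDr ?dvdnn // divnn q_gt0 addn1.
Qed.

Lemma prod_pivot K : \prod_(j < K.+1) pivot j = \prod_(j < K.+1) f j ^+ ((K - j) %/ q).
Proof.
elim/ltn_ind: K => K IH; have [ltKq | leqK] := ltnP K q.
  rewrite big1 => [|j _]; last by rewrite pivot_small // (leq_ltn_trans _ ltKq) // -ltnS.
  by rewrite big1 // => j _; rewrite divn_small ?expr0 // (leq_ltn_trans (leq_subr _ _)).
rewrite -(subnK leqK) prod_pivotDq IH ?prod_expDq; last by lia.
by rewrite -big_split; apply: eq_bigr => j _; rewrite exprSr.
Qed.

End Pivots.

Section TruncatedPowers.
Variables (C : pzRingType) (M : nat -> nat -> C).

Definition tpow (N k i j : nat) : C :=
  ((\matrix_(a < N.+1, b < N.+1) M a b) ^+ k) (inord i) (inord j).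

Lemma tpow0 N i j : (i <= N)%N -> (j <= N)%N -> tpow N 0 i j = (i == j)%:R.
Proof. by move=> leiN lejN; rewrite /tpow expr0 mxE -val_eqE /= !inordK. Qed.

Lemma tpowSr N k i j :
  (j <= N)%N -> tpow N k.+1 i j = \sum_(l < N.+1) tpow N k i l * M l j.
Proof.
move=> lejN; rewrite /tpow exprSr -mulmxE mxE.
by apply: eq_bigr => l _; rewrite mxE inord_val inordK.
Qed.

Lemma tpowS N k i j :
  (i <= N)%N -> tpow N k.+1 i j = \sum_(l < N.+1) M i l * tpow N k l j.
Proof.
move=> leiN; rewrite /tpow exprS -mulmxE mxE.
by apply: eq_bigr => l _; rewrite mxE inord_val inordK.
Qed.

Lemma tpowD N a b i j :
  tpow N (a + b) i j = \sum_(l < N.+1) tpow N a i l * tpow N b l j.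
Proof.
by rewrite /tpow exprD -mulmxE mxE; apply: eq_bigr => l _; rewrite inord_val.
Qed.

End TruncatedPowers.

Section UpperBand.
Variables (C : pzRingType) (r : nat) (M : nat -> nat -> C).
Hypothesis Mup : forall i j : nat, (i + r < j)%N -> M i j = 0.
Hypothesis Mdiag : forall i : nat, M i (i + r)%N = 1.

Lemma tpow_row_gt N k i j :
  (i + k * r < j)%N -> (j <= N)%N -> tpow M N k i j = 0.
Proof.
elim: k j => [|k IH] j ltij lejN.
  rewrite mul0n addn0 in ltij.
  by rewrite tpow0 ?(ltn_eqF ltij) // (leq_trans (ltnW ltij)).
rewrite tpowSr // big1 // => l _.
have [ltl | lel] := ltnP (i + k * r) l; first by rewrite IH ?mul0r // -ltnS.
by rewrite Mup ?mulr0 //; rewrite mulSnr in ltij; lia.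
Qed.

Lemma tpowSr_band N k i j : (i + k * r <= N)%N -> (j <= N)%N ->
  tpow M N k.+1 i j = \sum_(l < (i + k * r).+1) tpow M N k i l * M l j.
Proof.
move=> leN lejN; rewrite tpowSr //.
apply: (@big_ord_trunc _ _ _ (fun l => tpow M N k i l * M l j))
  => [|l /andP[ltl lelN]]; first by rewrite ltnS.
by rewrite tpow_row_gt ?mul0r.
Qed.

Lemma tpow_row_end N k i : (i + k * r <= N)%N -> tpow M N k i (i + k * r) = 1.
Proof.
elim: k => [|k IH] leN; first by rewrite mul0n addn0 in leN *; rewrite tpow0 ?eqxx.
have leN' : (i + k * r <= N)%N by rewrite mulSnr in leN; lia.
rewrite tpowSr_band // big_ord_recr /= IH // mulSnr addnA Mdiag mul1r.
rewrite big1 ?add0r // => l _.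
by rewrite Mup ?mulr0 //; have := ltn_ord l; lia.
Qed.

Lemma tpow_widen N N' k i j : (N <= N')%N -> (i + k * r <= N)%N -> (j <= N)%N ->
  tpow M N k i j = tpow M N' k i j.
Proof.
move=> leNN'; elim: k j => [|k IH] j leN lejN.
  by rewrite !tpow0 //; lia.
have leN' : (i + k * r <= N)%N by rewrite mulSnr in leN; lia.
rewrite !tpowSr_band //; try lia.
by apply: eq_bigr => l _; rewrite IH //; have := ltn_ord l; lia.
Qed.

End UpperBand.

Section LowerBand.
Variables (C : comPzRingType) (q : nat) (M : nat -> nat -> C).
Hypothesis Mlow : forall i j : nat, (j + q < i)%N -> M i j = 0.

Lemma tpow_col_gt N k i j :
  (j + k * q < i)%N -> (i <= N)%N -> tpow M N k i j = 0.
Proof.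
elim: k i => [|k IH] i ltji leiN.
  rewrite mul0n addn0 in ltji.
  by rewrite tpow0 ?(gtn_eqF ltji) // (leq_trans (ltnW ltji)).
rewrite tpowS // big1 // => l _.
have [ltl | lel] := ltnP (j + k * q) l; first by rewrite IH ?mulr0 // -ltnS.
by rewrite Mlow ?mul0r //; rewrite mulSnr in ltji; lia.
Qed.

Lemma tpowS_band N k i j : (i <= N)%N -> (j + k * q <= N)%N ->
  tpow M N k.+1 i j = \sum_(l < (j + k * q).+1) M i l * tpow M N k l j.
Proof.
move=> leiN leN; rewrite tpowS //.
apply: (@big_ord_trunc _ _ _ (fun l => M i l * tpow M N k l j))
  => [|l /andP[ltl lelN]]; first by rewrite ltnS.
by rewrite tpow_col_gt ?mulr0.
Qed.

Lemma tpow_col_end N k j : (j + k * q <= N)%N ->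
  tpow M N k (j + k * q) j = \prod_(t < k) M (j + t * q + q)%N (j + t * q)%N.
Proof.
elim: k => [|k IH] leN.
  by rewrite mul0n addn0 in leN *; rewrite big_ord0 tpow0 ?eqxx.
have leN' : (j + k * q <= N)%N by rewrite mulSnr in leN; lia.
rewrite tpowS_band // big_ord_recr /= IH // big_ord_recr /= mulSnr addnA mulrC.
rewrite big1 ?add0r // => l _.
by rewrite Mlow ?mul0r //; have := ltn_ord l; lia.
Qed.

End LowerBand.

Section BandDeterminant.
Variables (C : comPzRingType) (r q : nat) (M : nat -> nat -> C).
Hypotheses (r_gt0 : (0 < r)%N) (q_gt0 : (0 < q)%N).
Hypothesis Mup : forall i j : nat, (i + r < j)%N -> M i j = 0.
Hypothesis Mlow : forall i j : nat, (j + q < i)%N -> M i j = 0.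
Hypothesis Mdiag : forall i : nat, M i (i + r)%N = 1.

Lemma alpha_tpowD B i j : ((i %/ r + j %/ q).+1 * r + q <= B)%N ->
  alpha r q M i j
  = \sum_(l < B.+1) tpow M B (i %/ r) (i %% r) l * tpow M B (j %/ q) l (j %% q).
Proof.
move=> leB; rewrite -tpowD.
have ltir : (i %% r < r)%N by rewrite ltn_mod.
have ltjq : (j %% q < q)%N by rewrite ltn_mod.
apply: (tpow_widen Mup leB).
  by rewrite mulSnr addnC -addnA leq_add2l (leq_trans (ltnW ltir)) ?leq_addr.
by rewrite (leq_trans (ltnW ltjq)) ?leq_addl.
Qed.

Lemma Delta_prod_pivot K :
  Delta r q M K = \prod_(j < K.+1) pivot q (fun l => M (l + q)%N l) j.
Proof.
set B := ((K + K).+1 * r + q + K)%N.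
have leB (l : 'I_K.+1) : (l <= B)%N by rewrite (leq_trans _ (leq_addl _ K)) // -ltnS.
have rowE i : (i %% r + i %/ r * r = i)%N by rewrite addnC -divn_eq.
have colE j : (j %% q + j %/ q * q = j)%N by rewrite addnC -divn_eq.
pose L := \matrix_(i < K.+1, l < K.+1) tpow M B (i %/ r) (i %% r) l.
pose U := \matrix_(l < K.+1, j < K.+1) tpow M B (j %/ q) l (j %% q).
have L_trig : is_trig_mx L.
  by apply/is_trig_mxP => i l ltil; rewrite mxE (tpow_row_gt Mup) ?rowE.
have U_trig : is_trig_mx U^T.
  by apply/is_trig_mxP => j l ltjl; rewrite !mxE (tpow_col_gt Mlow) ?colE.
have LU : \matrix_(i < K.+1, j < K.+1) alpha r q M i j = L *m U.
  apply/matrixP => i j; rewrite !mxE (alpha_tpowD (B := B)); last first.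
    rewrite /B; apply: leq_trans (leq_addr _ _); rewrite leq_add2r leq_mul2r.
    by rewrite ltnS leq_add ?orbT // (leq_trans (leq_div _ _)) // -ltnS.
  under [RHS]eq_bigr => l _ do rewrite !mxE.
  apply: (@big_ord_trunc _ _ _
    (fun l => tpow M B (i %/ r) (i %% r) l * tpow M B (j %/ q) l (j %% q)))
    => [|l /andP[ltKl leBl]]; first by rewrite ltnS /B leq_addl.
  by rewrite (tpow_row_gt Mup) ?mul0r ?rowE // (leq_trans (ltn_ord i)).
rewrite /Delta LU det_mulmx det_trig // -det_tr det_trig //.
rewrite big1 ?mul1r => [|i _].
  apply: eq_bigr => j _.
  by rewrite !mxE -[X in tpow _ _ _ X _]colE (tpow_col_end Mlow) // colE.
by rewrite mxE -[X in tpow _ _ _ _ X]rowE (tpow_row_end Mup Mdiag) // rowE.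
Qed.

End BandDeterminant.

Theorem lemma1 (R : rcfType) (r q : nat) (M : nat -> nat -> R[i])
    (hr : (0 < r)%N) (hq : (0 < q)%N)
    (Hup : forall i k : nat, (i + r < k)%N -> M i k = 0)
    (Hlow : forall i k : nat, (k + q < i)%N -> M i k = 0)
    (Hdiag : forall i : nat, M i (i + r)%N = 1)
    (Hsub : forall i : nat, M (i + q)%N i != 0) :
  (forall k : nat, (k < q)%N -> Delta r q M k = 1) /\
  (forall i : nat,
     Delta r q M (i + q)%N
     = \prod_(j < i.+1) M (j + q)%N j ^+ ((i - j) %/ q).+1).
Proof.
have DeltaE := Delta_prod_pivot hr hq Hup Hlow Hdiag.
split=> [k ltkq | i]; rewrite DeltaE.
  by rewrite big1 // => j _; rewrite pivot_small // (leq_ltn_trans _ ltkq) // -ltnS.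
by rewrite (prod_pivot _ hq) (prod_expDq (fun l => M (l + q)%N l) hq).
Qed.
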